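(* If two signed graphs $SG_1$ and $SG_2$ are equivalent, then for every $i$, $H^i(SG_1)\cong H^i(SG_2)$ and $H^i_b(SG_1)\cong H^i_b(SG_2)$ as graded abelian groups.
   Context: Signed graphs: $SG=(G,\sigma)$, $G$ finite (loops, multiple edges allowed), $\sigma:E(G)\to\{\pm1\}$. Vertex switching at $v$ negates the sign of every non-loop edge incident to $v$ (loops keep their sign). Two signed graphs are equivalent if they are related by finitely many vertex switchings (on the same underlying graph). Negative circuit: product of edge signs $-1$; balanced = no negative circuit. $[G:s]$, $[SG:s]$: spanning subgraph with edge set $s$. Complexes: Fix a total order on $E(G)$. An enhanced state of $G$ is $S=(s,c)$, $c$ labels each component of $[G:s]$ by $1$ or $x$; $j(S)$ = number of $x$-labels (grading). With $m(1,1)=1$, $m(1,x)=m(x,1)=x$, $m(x,x)=0$: for $e\notin s$, $S_e=(s\cup\{e\},c_e)$ where a component containing both ends of $e$ keeps its label and if $e$ joins components $E_i,E_j$ the merged one gets $m(c(E_i),c(E_j))$ ($S_e=0$ if both are $x$). $d(S)=\sum_{e\notin s}(-1)^{n(e)}S_e$, $n(e)$ = number of edges of $s$ preceding $e$. $H^i(SG)$: cohomology of $C^\bullet(SG)$, free on enhanced states whose $c$ assigns $1$ to every unbalanced component of $[SG:s]$, differential $d_s=f\circ d$ with $f$ projecting onto these states. $H^i_b(SG)$: cohomology of $C^\bullet_b(SG)$, free on enhanced states with $[SG:s]$ balanced, differential $d_b=f_b\circ d$, $f_b$ the analogous projection. *)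

From HB Require Import structures.
From mathcomp Require Import all_boot all_order all_algebra.
From mathcomp Require Import generic_quotient.
From mathcomp Require Import boolp.
Set Implicit Arguments. Unset Strict Implicit. Unset Printing Implicit Defensive.
Import Order.TTheory GRing.Theory Num.Theory.
Local Open Scope quotient_scope.

(* Generic cohomology of a cochain operator on the free abelian group        *)
(* Z^(St) = {ffun St -> int}, given by its matrix [a S T] (coefficient of    *)
(* the basis element T in the image of the basis element S).  [P] selects   *)
(* the basis of the cochain group in the degree under consideration, [Q]    *)
(* the basis of the cochain group one degree lower.                         *)

Definition linop (St : finType) (a : St -> St -> int)
  (x : {ffun St -> int}) : {ffun St -> int} :=
  [ffun T => (\sum_(S : St) x S * a S T)%R].

Lemma linopB (St : finType) (a : St -> St -> int) (x y : {ffun St -> int}) :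
  linop a (x - y)%R = (linop a x - linop a y)%R.
Proof.
apply/ffunP => T; rewrite !ffunE -sumrB; apply: eq_bigr => S _.
by rewrite !ffunE mulrBl.
Qed.

Lemma linopD (St : finType) (a : St -> St -> int) (x y : {ffun St -> int}) :
  linop a (x + y)%R = (linop a x + linop a y)%R.
Proof.
apply/ffunP => T; rewrite !ffunE -big_split; apply: eq_bigr => S _.
by rewrite !ffunE mulrDl.
Qed.

Definition supp_in (St : finType) (P : pred St) (x : {ffun St -> int}) :=
  [forall S, ~~ P S ==> (x S == 0%R)].

Definition is_cocycle (St : finType) (a : St -> St -> int) (P : pred St)
  (x : {ffun St -> int}) := supp_in P x && (linop a x == 0%R).

Definition cocycle (St : finType) (a : St -> St -> int) (P : pred St) :=
  {x : {ffun St -> int} | is_cocycle a P x}.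

Definition cobrel (St : finType) (a : St -> St -> int) (P Q : pred St)
  (x y : cocycle a P) : bool :=
  `[< exists z : {ffun St -> int}, supp_in Q z /\ linop a z = (val x - val y)%R >].

Lemma supp_in0 (St : finType) (Q : pred St) : supp_in Q 0%R.
Proof. by apply/forallP => S; rewrite ffunE eqxx implybT. Qed.

Lemma supp_inB (St : finType) (Q : pred St) x y :
  supp_in Q x -> supp_in Q y -> supp_in Q (x - y)%R.
Proof.
move=> /forallP hx /forallP hy; apply/forallP => S; apply/implyP => nS.
by rewrite !ffunE (eqP (implyP (hx S) nS)) (eqP (implyP (hy S) nS)) subr0.
Qed.

Lemma supp_inD (St : finType) (Q : pred St) x y :
  supp_in Q x -> supp_in Q y -> supp_in Q (x + y)%R.
Proof.
move=> /forallP hx /forallP hy; apply/forallP => S; apply/implyP => nS.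
by rewrite !ffunE (eqP (implyP (hx S) nS)) (eqP (implyP (hy S) nS)) addr0.
Qed.

Lemma linop0 (St : finType) (a : St -> St -> int) : linop a 0%R = 0%R.
Proof. by apply/ffunP => T; rewrite !ffunE big1 // => S _; rewrite ffunE mul0r. Qed.

Lemma cobrel_refl (St : finType) (a : St -> St -> int) (P Q : pred St) :
  reflexive (@cobrel St a P Q).
Proof.
move=> x; rewrite /cobrel; apply/asboolP; exists 0%R; split; first exact: supp_in0.
by rewrite linop0 subrr.
Qed.

Lemma cobrel_sym (St : finType) (a : St -> St -> int) (P Q : pred St) :
  symmetric (@cobrel St a P Q).
Proof.
suff H : forall x y, @cobrel St a P Q x y -> @cobrel St a P Q y x.
  by move=> x y; apply/idP/idP; apply: H.
move=> x y; rewrite /cobrel => /asboolP [z [hz ez]]; apply/asboolP; exists (0 - z)%R; split.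
  by apply: supp_inB => //; apply: supp_in0.
by rewrite linopB linop0 ez sub0r opprB.
Qed.

Lemma cobrel_trans (St : finType) (a : St -> St -> int) (P Q : pred St) :
  transitive (@cobrel St a P Q).
Proof.
move=> y x w; rewrite /cobrel => /asboolP [z1 [h1 e1]] /asboolP [z2 [h2 e2]]; apply/asboolP.
exists (z1 + z2)%R; split; first exact: supp_inD.
by rewrite linopD e1 e2 addrA subrK.
Qed.

Definition cobequiv (St : finType) (a : St -> St -> int) (P Q : pred St) :
  equiv_rel (cocycle a P) :=
  EquivRel (@cobrel St a P Q) (@cobrel_refl St a P Q) (@cobrel_sym St a P Q)
    (@cobrel_trans St a P Q).

Definition cohom (St : finType) (a : St -> St -> int) (P Q : pred St) :=
  {eq_quot (cobequiv a P Q)}.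

Lemma is_cocycleD (St : finType) (a : St -> St -> int) (P : pred St)
  (x y : cocycle a P) : is_cocycle a P (val x + val y)%R.
Proof.
move: x y => [x hx] [y hy] /=.
case/andP: hx => sx /eqP dx; case/andP: hy => sy /eqP dy.
by rewrite /is_cocycle supp_inD //= linopD dx dy addr0 eqxx.
Qed.

Definition cocycle_add (St : finType) (a : St -> St -> int) (P : pred St)
  (x y : cocycle a P) : cocycle a P :=
  exist _ (val x + val y)%R (is_cocycleD x y).

Definition cohom_add (St : finType) (a : St -> St -> int) (P Q : pred St)
  (u v : cohom a P Q) : cohom a P Q :=
  \pi_(cohom a P Q) (cocycle_add (repr u) (repr v)).

Definition cohom_iso (St1 St2 : finType) (a1 : St1 -> St1 -> int)
  (a2 : St2 -> St2 -> int) (P1 Q1 : pred St1) (P2 Q2 : pred St2) : Prop :=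
  exists f : cohom a1 P1 Q1 -> cohom a2 P2 Q2,
    bijective f /\
    forall u v, f (cohom_add u v) = cohom_add (f u) (f v).

(* Signed graphs.  A finite graph (loops and multiple edges allowed) with    *)
(* vertex set V and edge set 'I_m (the total order on edges is the order of *)
(* 'I_m); [ends e] are the two end vertices of e (a loop has equal ends).   *)
(* A signature is sg : {ffun 'I_m -> bool} where sg e = true means          *)
(* sigma(e) = -1 and sg e = false means sigma(e) = +1.                      *)

Definition switch (V : finType) (m : nat) (ends : {ffun 'I_m -> V * V})
  (v : V) (sg : {ffun 'I_m -> bool}) : {ffun 'I_m -> bool} :=
  [ffun e => sg e (+) (((ends e).1 != (ends e).2) &&
                       (((ends e).1 == v) || ((ends e).2 == v)))].

Definition sg_equiv (V : finType) (m : nat) (ends : {ffun 'I_m -> V * V})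
  (sg1 sg2 : {ffun 'I_m -> bool}) : Prop :=
  exists vs : seq V, sg2 = foldl (fun sg v => switch ends v sg) sg1 vs.

Definition adj (V : finType) (m : nat) (ends : {ffun 'I_m -> V * V})
  (s : {set 'I_m}) : rel V :=
  fun u v => [exists e in s, (ends e == (u, v)) || (ends e == (v, u))].

Definition conn (V : finType) (m : nat) (ends : {ffun 'I_m -> V * V})
  (s : {set 'I_m}) : rel V := connect (adj ends s).

(* An enhanced state (s, c): c labels each component of [G:s] by 1 or x;   *)
(* we encode it as a vertex labelling constant on components               *)
(* (true = x, false = 1).                                                   *)
Definition state_ok (V : finType) (m : nat) (ends : {ffun 'I_m -> V * V})
  (p : {set 'I_m} * {ffun V -> bool}) : bool :=
  [forall u, forall v, conn ends p.1 u v ==> (p.2 u == p.2 v)].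

Definition state (V : finType) (m : nat) (ends : {ffun 'I_m -> V * V}) :=
  {p : {set 'I_m} * {ffun V -> bool} | state_ok ends p}.

Definition jdeg (V : finType) (m : nat) (ends : {ffun 'I_m -> V * V})
  (S : state ends) : nat :=
  #|[set [set w | conn ends (val S).1 v w] | v in [set v | (val S).2 v]]|.

(* the labelling c_e of S_e (merge rule m(1,1)=1, m(1,x)=m(x,1)=x) *)
Definition merge_lab (V : finType) (m : nat) (ends : {ffun 'I_m -> V * V})
  (S : state ends) (e : 'I_m) : {ffun V -> bool} :=
  let s := (val S).1 in let c := (val S).2 in
  let u := (ends e).1 in let v := (ends e).2 in
  [ffun w => if conn ends s u w || conn ends s v w then c u || c v else c w].

Definition Se_nonzero (V : finType) (m : nat) (ends : {ffun 'I_m -> V * V})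
  (S : state ends) (e : 'I_m) : bool :=
  let s := (val S).1 in let c := (val S).2 in
  let u := (ends e).1 in let v := (ends e).2 in
  ~~ [&& ~~ conn ends s u v, c u & c v].

(* coefficient of T in d(S) = sum_{e not in s} (-1)^{n(e)} S_e *)
Definition dcoef (V : finType) (m : nat) (ends : {ffun 'I_m -> V * V})
  (S T : state ends) : int :=
  (\sum_(e | e \notin (val S).1)
     if Se_nonzero S e &&
        (((val S).1 :|: [set e], merge_lab S e) == val T)
     then (-1) ^+ #|[set f in (val S).1 | (f < e)%N]| else 0)%R.

(* circuits: C = [e_1;..;e_k] distinct edges of s, vs = [v_0;..;v_{k-1}]   *)
(* distinct vertices, e_t joining v_{t-1} and v_t (indices mod k)          *)
Definition is_circuit (V : finType) (m : nat) (ends : {ffun 'I_m -> V * V})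
  (s : {set 'I_m}) (C : seq 'I_m) (vs : seq V) : Prop :=
  [/\ (0 < size C)%N, uniq C, uniq vs, all (fun e => e \in s) C &
      all2 (fun e p => (ends e == p) || (ends e == (p.2, p.1)))
           C (zip vs (rot 1 vs))].

(* negative circuit: product of signs is -1, i.e. an odd number of negative edges *)
Definition neg_circuit (V : finType) (m : nat) (ends : {ffun 'I_m -> V * V})
  (sg : {ffun 'I_m -> bool}) (s : {set 'I_m}) (C : seq 'I_m) (vs : seq V) :=
  is_circuit ends s C vs /\ odd (count (fun e => sg e) C).

Definition unbalanced_comp (V : finType) (m : nat) (ends : {ffun 'I_m -> V * V})
  (sg : {ffun 'I_m -> bool}) (s : {set 'I_m}) (v : V) : Prop :=
  exists C vs, neg_circuit ends sg s C vs /\ exists2 w, w \in vs & conn ends s v w.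

Definition balanced (V : finType) (m : nat) (ends : {ffun 'I_m -> V * V})
  (sg : {ffun 'I_m -> bool}) (s : {set 'I_m}) : Prop :=
  ~ exists C vs, neg_circuit ends sg s C vs.

(* basis of C^.(SG): c assigns 1 to every unbalanced component *)
Definition allowed_s (V : finType) (m : nat) (ends : {ffun 'I_m -> V * V})
  (sg : {ffun 'I_m -> bool}) (S : state ends) : bool :=
  `[< forall v, unbalanced_comp ends sg (val S).1 v -> (val S).2 v = false >].

Arguments allowed_s {V m} ends sg S.

(* basis of C^._b(SG): [SG:s] balanced *)
Definition allowed_b (V : finType) (m : nat) (ends : {ffun 'I_m -> V * V})
  (sg : {ffun 'I_m -> bool}) (S : state ends) : bool :=
  `[< balanced ends sg (val S).1 >].

Arguments allowed_b {V m} ends sg S.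

(* differentials d_s = f o d and d_b = f_b o d, as matrices *)
Definition dcoef_proj (V : finType) (m : nat) (ends : {ffun 'I_m -> V * V})
  (allowed : pred (state ends)) (S T : state ends) : int :=
  if allowed T then dcoef S T else 0%R.

Definition bideg (V : finType) (m : nat) (ends : {ffun 'I_m -> V * V})
  (i j : nat) (S : state ends) : bool :=
  (#|(val S).1| == i) && (jdeg S == j).

Definition bideg_prev (V : finType) (m : nat) (ends : {ffun 'I_m -> V * V})
  (i j : nat) (S : state ends) : bool :=
  (#|(val S).1|.+1 == i) && (jdeg S == j).

Definition Hs (V : finType) (m : nat) (ends : {ffun 'I_m -> V * V})
  (sg : {ffun 'I_m -> bool}) (i j : nat) :=
  cohom (dcoef_proj (allowed_s ends sg))
    (fun S => allowed_s ends sg S && bideg i j S)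
    (fun S => allowed_s ends sg S && bideg_prev i j S).

Definition Hb (V : finType) (m : nat) (ends : {ffun 'I_m -> V * V})
  (sg : {ffun 'I_m -> bool}) (i j : nat) :=
  cohom (dcoef_proj (allowed_b ends sg))
    (fun S => allowed_b ends sg S && bideg i j S)
    (fun S => allowed_b ends sg S && bideg_prev i j S).

(* isomorphism of H^i as graded abelian groups (grading j) *)
Definition Hs_iso (V : finType) (m : nat) (ends : {ffun 'I_m -> V * V})
  (sg1 sg2 : {ffun 'I_m -> bool}) (i : nat) : Prop :=
  forall j : nat,
    cohom_iso (dcoef_proj (allowed_s ends sg1)) (dcoef_proj (allowed_s ends sg2))
      (fun S => allowed_s ends sg1 S && bideg i j S)
      (fun S => allowed_s ends sg1 S && bideg_prev i j S)
      (fun S => allowed_s ends sg2 S && bideg i j S)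
      (fun S => allowed_s ends sg2 S && bideg_prev i j S).

Definition Hb_iso (V : finType) (m : nat) (ends : {ffun 'I_m -> V * V})
  (sg1 sg2 : {ffun 'I_m -> bool}) (i : nat) : Prop :=
  forall j : nat,
    cohom_iso (dcoef_proj (allowed_b ends sg1)) (dcoef_proj (allowed_b ends sg2))
      (fun S => allowed_b ends sg1 S && bideg i j S)
      (fun S => allowed_b ends sg1 S && bideg_prev i j S)
      (fun S => allowed_b ends sg2 S && bideg i j S)
      (fun S => allowed_b ends sg2 S && bideg_prev i j S).

From HB Require Import structures.
From mathcomp Require Import all_boot all_order all_algebra.
From mathcomp Require Import boolp.
Set Implicit Arguments. Unset Strict Implicit.

(* The complexes C(SG) and C_b(SG) depend on the signature only through   *)
(* which circuits of the spanning subgraphs [SG:s] are negative: this      *)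
(* decides which enhanced states are allowed, while the differential d    *)
(* itself ignores signs.  Hence it suffices to show that a vertex         *)
(* switching preserves the sign of every circuit.  Switching at v flips   *)
(* the sign of the non-loop edges at v; along a circuit (a closed walk)    *)
(* v occurs as often as a "first" endpoint as a "second" endpoint, so     *)
(* the number of flipped edges is even.  We first prove this parity fact  *)
(* for closed walks, deduce that equivalent signatures have the same      *)
(* negative circuits, hence the same allowed states, hence literally the  *)
(* same cochain complexes; the isomorphisms are then identities.          *)

Lemma odd_count_addb (T : Type) (a b : pred T) (s : seq T) :
  odd (count (fun x => a x (+) b x) s) = odd (count a s) (+) odd (count b s).
Proof.
elim: s => //= x s IH; rewrite !oddD !oddb IH.
by case: (a x); case: (b x); case: (odd (count a s)); case: (odd (count b s)).
Qed.

Lemma count_all2 (T U : Type) (r : T -> U -> bool) (f : pred T) (g : pred U)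
    (s1 : seq T) (s2 : seq U) :
  all2 r s1 s2 -> (forall x y, r x y -> f x = g y) -> count f s1 = count g s2.
Proof.
elim: s1 s2 => [|x s IH] [|y s2] //= /andP[rxy h] H.
by rewrite (H _ _ rxy) (IH _ h H).
Qed.

(* In the closed walk vs, each vertex is as often the tail as the head of
   a step: heads are a rotation of tails. *)
Lemma closed_walk_count_ends (V : eqType) (a : pred V) (vs : seq V) :
  count (fun p : V * V => a p.1) (zip vs (rot 1 vs)) =
  count (fun p : V * V => a p.2) (zip vs (rot 1 vs)).
Proof.
have sz : size vs = size (rot 1 vs) by rewrite size_rot.
have -> : count (fun p : V * V => a p.1) (zip vs (rot 1 vs)) =
          count a (unzip1 (zip vs (rot 1 vs))) by rewrite count_map.
have -> : count (fun p : V * V => a p.2) (zip vs (rot 1 vs)) =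
          count a (unzip2 (zip vs (rot 1 vs))) by rewrite count_map.
rewrite unzip1_zip ?sz // unzip2_zip ?sz //.
by apply/esym/permP; rewrite perm_rot.
Qed.

Lemma switched_edgeE (V : eqType) (v a b : V) :
  (a != b) && ((a == v) || (b == v)) = (a == v) (+) (b == v).
Proof.
case: (eqVneq a v) => [-> | av]; case: (eqVneq b v) => [E | bv];
  rewrite ?E ?eqxx //= ?av //.
by rewrite andbF.
Qed.

Lemma switch_circuit_parity (V : finType) (m : nat)
    (ends : {ffun 'I_m -> V * V}) (v : V) (sg : {ffun 'I_m -> bool})
    (s : {set 'I_m}) (C : seq 'I_m) (vs : seq V) :
  is_circuit ends s C vs -> odd (count (switch ends v sg) C) = odd (count sg C).
Proof.
case=> _ _ _ _ walk.
pose at_v (p : V * V) := (p.1 == v) (+) (p.2 == v).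
have flips : count (fun e => at_v (ends e)) C = count at_v (zip vs (rot 1 vs)).
  apply: (count_all2 walk) => e p.
  by case/orP=> /eqP-> //=; rewrite /at_v addbC.
have even_flips : ~~ odd (count (fun e => at_v (ends e)) C).
  rewrite flips (odd_count_addb (fun p : V * V => p.1 == v) (fun p => p.2 == v)).
  by rewrite (closed_walk_count_ends (pred1 v)) addbb.
have -> : count (switch ends v sg) C =
          count (fun e => sg e (+) at_v (ends e)) C.
  by apply: eq_count => e; rewrite ffunE switched_edgeE.
by rewrite odd_count_addb (negbTE even_flips) addbF.
Qed.

Lemma sg_equiv_neg_circuit (V : finType) (m : nat)
    (ends : {ffun 'I_m -> V * V}) (sg1 sg2 : {ffun 'I_m -> bool}) :
  sg_equiv ends sg1 sg2 ->
  forall s C vs, neg_circuit ends sg1 s C vs <-> neg_circuit ends sg2 s C vs.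
Proof.
case=> ws ->; elim: ws sg1 => [|v ws IH] sg1 s C vs //=.
rewrite -IH; split; case=> circ odd_neg; split => //.
  by rewrite (switch_circuit_parity v sg1 circ).
by rewrite -(switch_circuit_parity v sg1 circ).
Qed.

Section EquivalentSignatures.
Variables (V : finType) (m : nat) (ends : {ffun 'I_m -> V * V}).
Variables (sg1 sg2 : {ffun 'I_m -> bool}).
Hypothesis equiv12 : sg_equiv ends sg1 sg2.

Lemma allowed_s_equiv : allowed_s ends sg1 = allowed_s ends sg2.
Proof.
have E := sg_equiv_neg_circuit equiv12.
apply: funext => S; apply/asboolP/asboolP => h v [C [vs [neg w_on]]];
  by apply: h; exists C, vs; split => //; apply/E.
Qed.

Lemma allowed_b_equiv : allowed_b ends sg1 = allowed_b ends sg2.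
Proof.
have E := sg_equiv_neg_circuit equiv12.
by apply: funext => S; apply/asboolP/asboolP => h [C [vs neg]];
  apply: h; exists C, vs; apply/E.
Qed.

End EquivalentSignatures.

Lemma cohom_iso_refl (St : finType) (a : St -> St -> int) (P Q : pred St) :
  cohom_iso a a P Q P Q.
Proof. by exists id; split => //; exists id. Qed.

Theorem proposition5p3 (V : finType) (m : nat) (ends : {ffun 'I_m -> V * V})
  (sg1 sg2 : {ffun 'I_m -> bool}) :
  sg_equiv ends sg1 sg2 ->
  forall i : nat, Hs_iso ends sg1 sg2 i /\ Hb_iso ends sg1 sg2 i.
Proof.
move=> equiv12 i; split=> j.
  by rewrite /Hs_iso (allowed_s_equiv equiv12); apply: cohom_iso_refl.
by rewrite /Hb_iso (allowed_b_equiv equiv12); apply: cohom_iso_refl.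
Qed.
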